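(* Let $\psi\in C^1((0,\infty))$, $d>0$, and let $G=(V,E)$ be a finite graph with heat semigroup $(P_t)_{t\ge0}$. The following are equivalent: (1) $G$ satisfies $CD\psi(d,0)$. (2) For all $f\in C^+(V)$ and all $t\ge0$, \[ P_tf\;\Delta^\psi P_tf\ \ge\ P_t\!\left(f\,\Delta^\psi f\right)\left(1+\frac{2t}{d}\,\Delta^\psi P_tf\right). \] Moreover, if these hold, then $-\Delta^\psi P_tf\le\frac{d}{2t}$ for all $f\in C^+(V)$ and all $t>0$.
   Context: A finite graph $G=(V,E)$: finite set $V$, irreflexive symmetric relation $E$; $v\sim w$ iff $(v,w)\in E$. $C(V)$: real functions on $V$; $C^+(V)$: positive ones. Laplacian $\Delta f(v)=\sum_{w\sim v}(f(w)-f(v))$. Heat semigroup: $P_tf:=e^{t\Delta}f=\sum_{k\ge0}\frac{t^k\Delta^kf}{k!}$ for $t\ge0$ (it maps positive functions to positive functions). For $f\in C^+(V)$: $(\Delta^\psi f)(v):=\Delta\big[\psi\big(\tfrac{f}{f(v)}\big)\big](v)$; $(\Omega^\psi f)(v):=\Delta\Big[\psi'\big(\tfrac{f}{f(v)}\big)\cdot\tfrac{f}{f(v)}\cdot\big(\tfrac{\Delta f}{f}-\tfrac{(\Delta f)(v)}{f(v)}\big)\Big](v)$; $2\Gamma_2^\psi(f):=\Omega^\psi f+\frac{\Delta f\,\Delta^\psi f}{f}-\frac{\Delta(f\,\Delta^\psi f)}{f}$. $G$ satisfies $CD\psi(d,0)$ if $\Gamma_2^\psi(f)\ge\frac1d(\Delta^\psi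 f)^2$ for all $f\in C^+(V)$. All inequalities are pointwise on $V$. *)

From Stdlib Require Import Reals Lra ClassicalEpsilon Factorial.
Open Scope R_scope.

(* A finite graph on the vertex set V = {0, ..., n-1} is given by a boolean
   adjacency relation adj, assumed symmetric and irreflexive on V.
   Functions on V are represented as functions nat -> R; only their values on
   V matter. *)

Definition is_graph (n : nat) (adj : nat -> nat -> bool) : Prop :=
  (forall v, (v < n)%nat -> adj v v = false) /\
  (forall v w, (v < n)%nat -> (w < n)%nat -> adj v w = adj w v).

Fixpoint sumV (n : nat) (g : nat -> R) : R :=
  match n with
  | O => 0
  | S m => sumV m g + g m
  end.

Definition Lap (n : nat) (adj : nat -> nat -> bool) (f : nat -> R) (v : nat) : R :=
  sumV n (fun w => if adj v w then f w - f v else 0).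

Fixpoint LapPow (n : nat) (adj : nat -> nat -> bool) (k : nat) (f : nat -> R) : nat -> R :=
  match k with
  | O => f
  | S j => Lap n adj (LapPow n adj j f)
  end.

(* Heat semigroup P_t f = sum_{k>=0} t^k Lap^k f / k!  (the series converges;
   its sum is selected by the choice operator). *)
Definition heat (n : nat) (adj : nat -> nat -> bool) (t : R) (f : nat -> R) (v : nat) : R :=
  epsilon (inhabits 0)
    (fun l => infinite_sum (fun k => t ^ k * LapPow n adj k f v / INR (fact k)) l).

Definition posfun (n : nat) (f : nat -> R) : Prop := forall v, (v < n)%nat -> 0 < f v.

Definition DeltaPsi (n : nat) (adj : nat -> nat -> bool) (psi : R -> R)
  (f : nat -> R) (v : nat) : R :=
  Lap n adj (fun w => psi (f w / f v)) v.

Definition OmegaPsi (n : nat) (adj : nat -> nat -> bool) (dpsi : R -> R)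
  (f : nat -> R) (v : nat) : R :=
  Lap n adj (fun w => dpsi (f w / f v) * (f w / f v) *
                      (Lap n adj f w / f w - Lap n adj f v / f v)) v.

Definition Gamma2Psi (n : nat) (adj : nat -> nat -> bool) (psi dpsi : R -> R)
  (f : nat -> R) (v : nat) : R :=
  (OmegaPsi n adj dpsi f v
   + Lap n adj f v * DeltaPsi n adj psi f v / f v
   - Lap n adj (fun w => f w * DeltaPsi n adj psi f w) v / f v) / 2.

Definition CDpsi (n : nat) (adj : nat -> nat -> bool) (psi dpsi : R -> R) (d : R) : Prop :=
  forall f, posfun n f -> forall v, (v < n)%nat ->
    Gamma2Psi n adj psi dpsi f v >= / d * (DeltaPsi n adj psi f v) ^ 2.

From Stdlib Require Import Reals Lra Lia Psatz ClassicalEpsilon Factorial.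
From Coquelicot Require Import Coquelicot.
Open Scope R_scope.

(* Bakry-Emery interpolation.  For fixed t, let
   Phi s = P_(t-s) (P_s f * Delta^psi P_s f).  Differentiating, with
   d/ds Delta^psi P_s f = Omega^psi P_s f, gives
   Phi' s = P_(t-s) (2 P_s f * Gamma_2^psi (P_s f)); under CD psi (d, 0) this is
   at least (2/d) P_(t-s) (P_s f (Delta^psi P_s f)^2), hence, by Cauchy-Schwarz
   for the positive operator P_(t-s) and P_(t-s) P_s f = P_t f, at least
   2 Phi(s)^2 / (d P_t f).  Integrating this Riccati inequality over [0, t] gives
   (2), and also Phi 0 <= Phi t, which together yield the bound on
   -Delta^psi P_t f.  Conversely, (2) is an equality at t = 0, so the derivative
   at t = 0 of the difference of its two sides, which is
   2 f (Gamma_2^psi f - (Delta^psi f)^2 / d), is nonnegative.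
   P_t is the power series exp (t L) of the Laplacian matrix; it preserves
   positivity because exp (t L) = exp (-n t) exp (t (L + n I)), where L + n I
   has nonnegative entries. *)

(* Coquelicot states these rules with its generic [plus], [mult], ...; the
   versions below use the real operations so that they apply by unification. *)
Lemma is_derive_eq_val (f : R -> R) (x l l' : R) :
  is_derive f x l -> l = l' -> is_derive f x l'.
Proof. now intros H ->. Qed.

Lemma is_derive_Rconst (c x : R) : is_derive (fun _ => c) x 0.
Proof. exact (is_derive_const c x). Qed.

Lemma is_derive_Rid (x : R) : is_derive (fun y => y) x 1.
Proof. exact (is_derive_id x). Qed.

Lemma is_derive_Rplus (f g : R -> R) (x a b : R) :
  is_derive f x a -> is_derive g x b -> is_derive (fun y => f y + g y) x (a + b).
Proof. intros; now apply (is_derive_plus f g). Qed.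

Lemma is_derive_Rminus (f g : R -> R) (x a b : R) :
  is_derive f x a -> is_derive g x b -> is_derive (fun y => f y - g y) x (a - b).
Proof. intros; now apply (is_derive_minus f g). Qed.

Lemma is_derive_Rmult (f g : R -> R) (x a b : R) :
  is_derive f x a -> is_derive g x b ->
  is_derive (fun y => f y * g y) x (a * g x + f x * b).
Proof. intros; apply (is_derive_mult f g); auto. intros; apply Rmult_comm. Qed.

Lemma is_derive_Rcomp (f g : R -> R) (x a b : R) :
  is_derive f (g x) a -> is_derive g x b -> is_derive (fun y => f (g y)) x (b * a).
Proof. intros; now apply (is_derive_comp f g). Qed.

Lemma is_derive_Rscal (k x : R) : is_derive (fun s => k * s) x k.
Proof.
  eapply is_derive_eq_val.
  - apply (is_derive_Rmult (fun _ => k) (fun s => s)); [apply is_derive_Rconst | apply is_derive_Rid].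
  - ring.
Qed.

Lemma is_derive_exp_scal (k x : R) : is_derive (fun s => exp (k * s)) x (k * exp (k * x)).
Proof. apply (is_derive_Rcomp exp (fun s => k * s)); [apply is_derive_exp | apply is_derive_Rscal]. Qed.

Lemma nonincreasing_of_is_derive (f df : R -> R) a b : a <= b ->
  (forall x, a <= x <= b -> is_derive f x (df x)) ->
  (forall x, a <= x <= b -> df x <= 0) -> f b <= f a.
Proof.
  intros Hab Hd Hn. destruct (MVT_gen f a b df) as [c [Hc Heq]].
  - intros x Hx. apply Hd. rewrite Rmin_left, Rmax_right in Hx by lra. lra.
  - intros x Hx. rewrite Rmin_left, Rmax_right in Hx by lra.
    apply continuity_pt_filterlim, (ex_derive_continuous f). exists (df x). apply Hd; lra.
  - rewrite Rmin_left, Rmax_right in Hc by lra. specialize (Hn c Hc). nra.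
Qed.

Lemma nondecreasing_of_is_derive (f df : R -> R) a b : a <= b ->
  (forall x, a <= x <= b -> is_derive f x (df x)) ->
  (forall x, a <= x <= b -> 0 <= df x) -> f a <= f b.
Proof.
  intros Hab Hd Hn.
  enough (- f b <= - f a) by lra.
  apply (nonincreasing_of_is_derive (fun x => - f x) (fun x => - df x)); auto.
  - intros x Hx. exact (is_derive_opp f x (df x) (Hd x Hx)).
  - intros x Hx; specialize (Hn x Hx); lra.
Qed.

Lemma constant_of_is_derive_0 (f : R -> R) a b : a <= b ->
  (forall x, a <= x <= b -> is_derive f x 0) -> f b = f a.
Proof.
  intros Hab Hd. apply Rle_antisym.
  - apply (nonincreasing_of_is_derive f (fun _ => 0)); auto; intros; lra.
  - apply (nondecreasing_of_is_derive f (fun _ => 0)); auto; intros; lra.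
Qed.

Lemma is_derive_nonneg_at_0 (g : R -> R) l : is_derive g 0 l -> g 0 = 0 ->
  (forall t, 0 < t -> 0 <= g t) -> 0 <= l.
Proof.
  intros HD H0 Hp. apply is_derive_Reals in HD.
  destruct (Rlt_or_le l 0) as [Hl|Hl]; auto.
  destruct (HD (- l / 2)) as [[del Hd0] Hdel]; [lra|]. simpl in Hdel.
  specialize (Hdel (del / 2) ltac:(lra)).
  rewrite Rabs_right in Hdel by lra. specialize (Hdel ltac:(lra)).
  rewrite Rplus_0_l, H0, Rminus_0_r in Hdel.
  specialize (Hp (del / 2) ltac:(lra)).
  assert (0 <= g (del / 2) / (del / 2)) by (apply Rdiv_le_0_compat; lra).
  apply Rabs_def2 in Hdel. lra.
Qed.

Section Riccati.
Variables (Phi dPhi : R -> R) (k t : R).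
Hypothesis (Hk : 0 < k) (Ht : 0 <= t).
Hypothesis HPhi : forall s, 0 <= s <= t -> is_derive Phi s (dPhi s).
Hypothesis Hriccati : forall s, 0 <= s <= t -> k * Phi s ^ 2 <= dPhi s.

Lemma riccati_nondecreasing a b : 0 <= a -> a <= b -> b <= t -> Phi a <= Phi b.
Proof.
  intros Ha Hab Hb. apply (nondecreasing_of_is_derive Phi dPhi a b Hab).
  - intros; apply HPhi; lra.
  - intros x Hx. specialize (Hriccati x ltac:(lra)). nra.
Qed.

(* [1 / Phi + k s] is nonincreasing as long as [Phi] does not vanish. *)
Lemma riccati_inv : (forall s, 0 <= s <= t -> Phi s <> 0) -> / Phi t + k * t <= / Phi 0.
Proof.
  intros Hnz. enough (/ Phi t + k * t <= / Phi 0 + k * 0) by lra.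
  apply (nonincreasing_of_is_derive (fun s => / Phi s + k * s)
           (fun s => - dPhi s / Phi s ^ 2 + k) 0 t Ht).
  - intros s Hs. apply is_derive_Rplus; [apply is_derive_inv | apply is_derive_Rscal].
    + now apply HPhi.
    + now apply Hnz.
  - intros s Hs. specialize (Hriccati s Hs).
    assert (0 < Phi s ^ 2) by (apply pow2_gt_0, Hnz, Hs).
    enough (k <= dPhi s / Phi s ^ 2) by (unfold Rdiv in *; lra).
    apply (Rmult_le_reg_r (Phi s ^ 2)); auto.
    unfold Rdiv. rewrite Rmult_assoc, Rinv_l; lra.
Qed.

Lemma riccati_integrated : Phi 0 + k * t * Phi 0 * Phi t <= Phi t.
Proof.
  assert (Hmono : forall s, 0 <= s <= t -> Phi 0 <= Phi s <= Phi t)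
    by (intros s Hs; split; apply riccati_nondecreasing; lra).
  destruct (Rlt_or_le 0 (Phi 0 * Phi t)) as [Hpos|Hnpos].
  - assert (Hinv : / Phi t + k * t <= / Phi 0).
    { apply riccati_inv. intros s Hs Hz. specialize (Hmono s Hs). rewrite Hz in Hmono. nra. }
    assert (Phi 0 <> 0 /\ Phi t <> 0) as [H0 Ht0] by (split; intro Hz; rewrite Hz in Hpos; lra).
    apply (Rmult_le_compat_l (Phi 0 * Phi t)) in Hinv; [|lra].
    replace (Phi 0 * Phi t * (/ Phi t + k * t)) with (Phi 0 + k * t * Phi 0 * Phi t) in Hinv
      by (field; auto).
    replace (Phi 0 * Phi t * / Phi 0) with (Phi t) in Hinv by (field; auto). lra.
  - assert (Phi 0 <= Phi t) by (apply Hmono; lra).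
    assert (0 <= k * t) by nra. nra.
Qed.
End Riccati.

Lemma sumV_ext m g h : (forall w, (w < m)%nat -> g w = h w) -> sumV m g = sumV m h.
Proof.
  induction m as [|m IH]; simpl; intros H; auto.
  rewrite IH, H; auto; intros; apply H; lia.
Qed.

Lemma sumV_plus m g h : sumV m (fun w => g w + h w) = sumV m g + sumV m h.
Proof. induction m as [|m IH]; simpl; [lra | rewrite IH; lra]. Qed.

Lemma sumV_minus m g h : sumV m (fun w => g w - h w) = sumV m g - sumV m h.
Proof. induction m as [|m IH]; simpl; [lra | rewrite IH; lra]. Qed.

Lemma sumV_scal m c g : sumV m (fun w => c * g w) = c * sumV m g.
Proof. induction m as [|m IH]; simpl; [lra | rewrite IH; lra]. Qed.

Lemma sumV_const m c : sumV m (fun _ => c) = INR m * c.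
Proof. induction m as [|m IH]; simpl sumV; [simpl; lra | rewrite IH, S_INR; lra]. Qed.

Lemma sumV_zero m : sumV m (fun _ => 0) = 0.
Proof. rewrite sumV_const; lra. Qed.

Lemma sumV_le m g h : (forall w, (w < m)%nat -> g w <= h w) -> sumV m g <= sumV m h.
Proof.
  induction m as [|m IH]; simpl; intros H; [lra|].
  specialize (IH ltac:(intros; apply H; lia)). specialize (H m ltac:(lia)); lra.
Qed.

Lemma sumV_nonneg m g : (forall w, (w < m)%nat -> 0 <= g w) -> 0 <= sumV m g.
Proof. intros H. rewrite <- (sumV_zero m). now apply sumV_le. Qed.

Lemma Rabs_sumV_le m g : Rabs (sumV m g) <= sumV m (fun w => Rabs (g w)).
Proof.
  induction m as [|m IH]; simpl; [rewrite Rabs_R0; lra|].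
  eapply Rle_trans; [apply Rabs_triang | lra].
Qed.

Lemma sumV_ge_term m g v : (forall w, (w < m)%nat -> 0 <= g w) -> (v < m)%nat ->
  g v <= sumV m g.
Proof.
  induction m as [|m IH]; simpl; intros H Hv; [lia|].
  assert (0 <= sumV m g) by (apply sumV_nonneg; intros; apply H; lia).
  destruct (Nat.eq_dec v m) as [->|Hne]; [lra|].
  assert (g v <= sumV m g) by (apply IH; [intros; apply H; lia | lia]).
  specialize (H m ltac:(lia)); lra.
Qed.

Lemma sumV_kronecker m (c : nat -> R) v : (v < m)%nat ->
  sumV m (fun w => if Nat.eqb v w then c w else 0) = c v.
Proof.
  induction m as [|m IH]; simpl; intros Hv; [lia|].
  destruct (Nat.eqb_spec v m) as [->|Hne].
  - rewrite (sumV_ext m _ (fun _ => 0)), sumV_zero; [lra|].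
    intros w Hw. destruct (Nat.eqb_spec m w); auto; lia.
  - rewrite IH by lia. lra.
Qed.

Lemma is_derive_sumV m (F : R -> nat -> R) (F' : nat -> R) (x : R) :
  (forall w, (w < m)%nat -> is_derive (fun y => F y w) x (F' w)) ->
  is_derive (fun y => sumV m (F y)) x (sumV m F').
Proof.
  induction m as [|m IH]; simpl; intros H; [apply is_derive_Rconst|].
  apply is_derive_Rplus; [apply IH; intros; apply H | apply H]; lia.
Qed.

Lemma linear_sumV (T : (nat -> R) -> R) m (c : nat -> R) (h : nat -> nat -> R) :
  (forall g g' a, T (fun w => g w + a * g' w) = T g + a * T g') ->
  T (fun _ => 0) = 0 ->
  T (fun u => sumV m (fun w => c w * h w u)) = sumV m (fun w => c w * T (h w)).
Proof.
  intros Hlin H0. induction m as [|m IH]; [exact H0|].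
  simpl. rewrite <- IH. apply Hlin.
Qed.

Lemma pow_div_fact_le_exp y k : 0 <= y -> y ^ k / INR (fact k) <= exp y.
Proof.
  intros Hy. pose proof (is_exp_Reals y) as H.
  apply is_series_Reals in H.
  set (s := fun j : nat => scal (pow_n y j) (/ INR (fact j))) in H.
  assert (Hs : forall j, s j = y ^ j / INR (fact j)) by (intros; unfold s; now rewrite pow_n_pow).
  assert (Hnn : forall j, 0 <= s j).
  { intros; rewrite Hs. apply Rmult_le_pos; [now apply pow_le|].
    apply Rlt_le, Rinv_0_lt_compat, INR_fact_lt_0. }
  assert (Hgrow : Un_growing (sum_f_R0 s)) by (intro m; simpl; specialize (Hnn (S m)); lra).
  rewrite <- Hs. eapply Rle_trans; [|exact (growing_ineq _ _ Hgrow H k)].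
  destruct k; simpl; [lra|].
  assert (0 <= sum_f_R0 s k) by (apply cond_pos_sum; auto). lra.
Qed.

Lemma PSeries_sumV m (c : nat -> R) (a : nat -> nat -> R) t :
  (forall w, (w < m)%nat -> ex_pseries (a w) t) ->
  ex_pseries (fun k => sumV m (fun w => c w * a w k)) t /\
  sumV m (fun w => c w * PSeries (a w) t) = PSeries (fun k => sumV m (fun w => c w * a w k)) t.
Proof.
  induction m as [|m IH]; intros H; simpl.
  - split; [|now rewrite PSeries_const_0].
    apply CV_radius_inside. now rewrite CV_radius_const_0.
  - destruct IH as [H1 H2]; [intros; apply H; lia|].
    assert (H3 : ex_pseries (PS_scal (c m) (a m)) t)
      by (apply ex_pseries_scal; [apply Rmult_comm | apply H; lia]).
    split.
    + eapply ex_pseries_ext; [|apply (ex_pseries_plus _ _ _ H1 H3)]. reflexivity.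
    + rewrite H2, <- PSeries_scal, <- PSeries_plus by auto. reflexivity.
Qed.

Section MatrixExponential.
Variables (n : nat) (M : nat -> nat -> R).

Definition matvec (g : nat -> R) (v : nat) : R := sumV n (fun w => M v w * g w).

Fixpoint matpow (k : nat) (g : nat -> R) : nat -> R :=
  match k with O => g | S j => matvec (matpow j g) end.

Definition vnorm (g : nat -> R) : R := sumV n (fun w => Rabs (g w)).
Definition rownorm (v : nat) : R := sumV n (fun w => Rabs (M v w)).
Definition mnorm : R := sumV n rownorm.

Definition expm_coef (g : nat -> R) (v k : nat) : R := matpow k g v / INR (fact k).

Definition expm (t : R) (g : nat -> R) (v : nat) : R := PSeries (expm_coef g v) t.

Lemma matvec_ext g h v : (forall w, (w < n)%nat -> g w = h w) -> matvec g v = matvec h v.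
Proof. intros H; apply sumV_ext; intros; now rewrite H. Qed.

Lemma matvec_lin g h a v : matvec (fun w => g w + a * h w) v = matvec g v + a * matvec h v.
Proof. unfold matvec. rewrite <- sumV_scal, <- sumV_plus. apply sumV_ext; intros; ring. Qed.

Lemma matvec_zero v : matvec (fun _ => 0) v = 0.
Proof. unfold matvec. rewrite (sumV_ext n _ (fun _ => 0)); [apply sumV_zero | intros; ring]. Qed.

Lemma matpow_ext k g h v : (forall w, (w < n)%nat -> g w = h w) -> (v < n)%nat ->
  matpow k g v = matpow k h v.
Proof.
  intros H. revert v; induction k as [|k IH]; simpl; intros v Hv; auto.
  apply matvec_ext; intros; auto.
Qed.

Lemma matpow_lin k g h a v : matpow k (fun w => g w + a * h w) v = matpow k g v + a * matpow k h v.
Proof.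
  revert v; induction k as [|k IH]; simpl; intros v; auto.
  rewrite <- matvec_lin. now apply matvec_ext.
Qed.

Lemma matpow_zero k v : matpow k (fun _ => 0) v = 0.
Proof.
  revert v; induction k as [|k IH]; simpl; intros v; auto.
  transitivity (matvec (fun _ => 0) v); [now apply matvec_ext | apply matvec_zero].
Qed.

Lemma matpow_succ_r k g v : matpow (S k) g v = matpow k (matvec g) v.
Proof.
  revert v; induction k as [|k IH]; intros v; auto.
  change (matvec (matpow (S k) g) v = matvec (matpow k (matvec g)) v).
  now apply matvec_ext.
Qed.

Lemma vnorm_nonneg g : 0 <= vnorm g.
Proof. apply sumV_nonneg; intros; apply Rabs_pos. Qed.

Lemma rownorm_nonneg v : 0 <= rownorm v.
Proof. apply sumV_nonneg; intros; apply Rabs_pos. Qed.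

Lemma mnorm_nonneg : 0 <= mnorm.
Proof. apply sumV_nonneg; intros; apply rownorm_nonneg. Qed.

Lemma Rabs_le_vnorm g w : (w < n)%nat -> Rabs (g w) <= vnorm g.
Proof. intros; apply (sumV_ge_term n (fun w => Rabs (g w))); auto; intros; apply Rabs_pos. Qed.

Lemma Rabs_entry_le_mnorm v w : (v < n)%nat -> (w < n)%nat -> Rabs (M v w) <= mnorm.
Proof.
  intros Hv Hw. apply Rle_trans with (rownorm v).
  - apply (sumV_ge_term n (fun w => Rabs (M v w))); auto; intros; apply Rabs_pos.
  - apply (sumV_ge_term n rownorm); auto; intros; apply rownorm_nonneg.
Qed.

Lemma Rabs_matvec_le g v : Rabs (matvec g v) <= rownorm v * vnorm g.
Proof.
  eapply Rle_trans; [apply Rabs_sumV_le|].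
  unfold rownorm. rewrite Rmult_comm, <- sumV_scal. apply sumV_le; intros w Hw.
  rewrite Rabs_mult, (Rmult_comm (vnorm g)).
  apply Rmult_le_compat_l; [apply Rabs_pos | now apply Rabs_le_vnorm].
Qed.

Lemma vnorm_matpow_le k g : vnorm (matpow k g) <= mnorm ^ k * vnorm g.
Proof.
  induction k as [|k IH]; simpl; [lra|].
  apply Rle_trans with (mnorm * vnorm (matpow k g)).
  - unfold vnorm at 1, mnorm. rewrite Rmult_comm, <- sumV_scal.
    apply sumV_le; intros w Hw. rewrite Rmult_comm; apply Rabs_matvec_le.
  - rewrite Rmult_assoc. apply Rmult_le_compat_l; [apply mnorm_nonneg | exact IH].
Qed.

Lemma expm_radius g v x : (v < n)%nat -> Rbar_lt (Rabs x) (CV_radius (expm_coef g v)).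
Proof.
  intros Hv. destruct (CV_radius_bounded (expm_coef g v)) as [Hub _].
  enough (Hb : exists B, forall k, Rabs (expm_coef g v k * (Rabs x + 1) ^ k) <= B).
  { specialize (Hub _ Hb). destruct (CV_radius (expm_coef g v)); simpl in *; auto; lra. }
  set (r := Rabs x + 1). exists (vnorm g * exp (mnorm * Rabs r)). intros k.
  assert (0 < INR (fact k)) by apply INR_fact_lt_0.
  pose proof mnorm_nonneg.
  assert (Hpow : Rabs (matpow k g v) <= mnorm ^ k * vnorm g).
  { eapply Rle_trans; [apply Rabs_le_vnorm, Hv | apply vnorm_matpow_le]. }
  assert (Hexp := pow_div_fact_le_exp (mnorm * Rabs r) k
                    ltac:(apply Rmult_le_pos; [lra | apply Rabs_pos])).
  unfold expm_coef, Rdiv. rewrite !Rabs_mult, Rabs_inv, (Rabs_right (INR (fact k))), <- RPow_abs by lra.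
  rewrite Rpow_mult_distr in Hexp. unfold Rdiv in Hexp.
  apply Rle_trans with (vnorm g * (mnorm ^ k * Rabs r ^ k * / INR (fact k))).
  - assert (0 <= Rabs r ^ k) by (apply pow_le, Rabs_pos).
    assert (0 < / INR (fact k)) by (apply Rinv_0_lt_compat; lra).
    replace (vnorm g * (mnorm ^ k * Rabs r ^ k * / INR (fact k)))
      with (mnorm ^ k * vnorm g * / INR (fact k) * Rabs r ^ k) by ring.
    apply Rmult_le_compat_r; [lra|]. apply Rmult_le_compat_r; lra.
  - apply Rmult_le_compat_l; [apply vnorm_nonneg | exact Hexp].
Qed.

Lemma ex_pseries_expm_coef g v x : (v < n)%nat -> ex_pseries (expm_coef g v) x.
Proof. intros; now apply CV_radius_inside, expm_radius. Qed.

Lemma expm_0 g v : expm 0 g v = g v.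
Proof. unfold expm. rewrite PSeries_0. unfold expm_coef; simpl; field. Qed.

Lemma expm_ext t g h v : (forall w, (w < n)%nat -> g w = h w) -> (v < n)%nat ->
  expm t g v = expm t h v.
Proof.
  intros H Hv. apply PSeries_ext. intros k; unfold expm_coef. now rewrite (matpow_ext k g h v).
Qed.

Lemma expm_lin t g h a v : (v < n)%nat ->
  expm t (fun w => g w + a * h w) v = expm t g v + a * expm t h v.
Proof.
  intros Hv. unfold expm. rewrite <- PSeries_scal, <- PSeries_plus.
  - apply PSeries_ext. intros k. unfold expm_coef, PS_plus, PS_scal.
    rewrite matpow_lin. change plus with Rplus. change scal with Rmult. simpl.
    unfold mult; simpl. field. apply INR_fact_neq_0.
  - now apply ex_pseries_expm_coef.
  - apply ex_pseries_scal; [apply Rmult_comm | now apply ex_pseries_expm_coef].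
Qed.

Lemma expm_zero t v : expm t (fun _ => 0) v = 0.
Proof.
  unfold expm. transitivity (PSeries (fun _ => 0) t); [|apply PSeries_const_0].
  apply PSeries_ext; intros k.
  unfold expm_coef. rewrite matpow_zero. unfold Rdiv; ring.
Qed.

Lemma expm_sumV t m (c : nat -> R) (h : nat -> nat -> R) v : (v < n)%nat ->
  expm t (fun u => sumV m (fun w => c w * h w u)) v = sumV m (fun w => c w * expm t (h w) v).
Proof.
  intros Hv. apply (linear_sumV (fun g => expm t g v)); [intros; now apply expm_lin | apply expm_zero].
Qed.

Lemma matvec_expm t g v : matvec (expm t g) v = expm t (matvec g) v.
Proof.
  unfold matvec at 1, expm.
  destruct (PSeries_sumV n (M v) (expm_coef g) t) as [_ ->].
  - intros; now apply ex_pseries_expm_coef.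
  - apply PSeries_ext. intros k. unfold expm_coef.
    rewrite <- matpow_succ_r. simpl. unfold matvec, Rdiv. rewrite Rmult_comm, <- sumV_scal.
    apply sumV_ext; intros; ring.
Qed.

Lemma is_derive_expm t g v : (v < n)%nat ->
  is_derive (fun s => expm s g v) t (matvec (expm t g) v).
Proof.
  intros Hv. rewrite matvec_expm.
  eapply is_derive_eq_val; [apply is_derive_PSeries, expm_radius, Hv|].
  apply PSeries_ext. intros k. unfold PS_derive, expm_coef.
  rewrite <- matpow_succ_r, fact_simpl, mult_INR. field.
  split; [apply INR_fact_neq_0 | apply not_0_INR; lia].
Qed.

Lemma matvec_sumV m (c : nat -> R) (h : nat -> nat -> R) v :
  matvec (fun u => sumV m (fun w => c w * h w u)) v = sumV m (fun w => c w * matvec (h w) v).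
Proof. apply (linear_sumV (fun g => matvec g v)); [intros; apply matvec_lin | apply matvec_zero]. Qed.

Definition unit_vec (w u : nat) : R := if Nat.eqb w u then 1 else 0.

Lemma sumV_unit_vec g u : (u < n)%nat -> sumV n (fun w => g w * unit_vec w u) = g u.
Proof.
  intros Hu. rewrite <- (sumV_kronecker n g u Hu). apply sumV_ext; intros w _.
  unfold unit_vec. rewrite Nat.eqb_sym. destruct (Nat.eqb u w); ring.
Qed.

Lemma expm_kernel t g v : (v < n)%nat ->
  expm t g v = sumV n (fun w => g w * expm t (unit_vec w) v).
Proof.
  intros Hv. rewrite <- expm_sumV by auto. apply expm_ext; auto.
  intros; symmetry; now apply sumV_unit_vec.
Qed.

Lemma expm_matvec_kernel t h v : (v < n)%nat ->
  expm t (matvec h) v = sumV n (fun w => h w * matvec (expm t (unit_vec w)) v).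
Proof.
  intros Hv. rewrite (expm_ext t _ (fun u => sumV n (fun w => h w * matvec (unit_vec w) u))); auto.
  - rewrite expm_sumV by auto. apply sumV_ext; intros. now rewrite matvec_expm.
  - intros u Hu. rewrite <- matvec_sumV. apply matvec_ext; intros. symmetry; now apply sumV_unit_vec.
Qed.

(* Via the kernel representation [expm_kernel], which separates the two
   occurrences of [s]. *)
Lemma is_derive_expm_backward t (H : R -> nat -> R) (H' : nat -> R) s v : (v < n)%nat ->
  (forall w, (w < n)%nat -> is_derive (fun s => H s w) s (H' w)) ->
  is_derive (fun s => expm (t - s) (H s) v) s (expm (t - s) (fun w => H' w - matvec (H s) w) v).
Proof.
  intros Hv HD. eapply is_derive_ext; [intros r; symmetry; now apply expm_kernel|].
  eapply is_derive_eq_val.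
  - apply is_derive_sumV; intros w Hw. apply is_derive_Rmult; [now apply HD|].
    apply (is_derive_Rcomp (fun tau => expm tau (unit_vec w) v) (fun s => t - s)).
    + now apply is_derive_expm.
    + apply (is_derive_Rminus (fun _ => t) (fun s => s));
        [apply is_derive_Rconst | apply is_derive_Rid].
  - rewrite (expm_ext _ _ (fun w => H' w + (-1) * matvec (H s) w)) by (auto; intros; ring).
    rewrite expm_lin, expm_matvec_kernel, (expm_kernel _ H') by auto.
    rewrite <- sumV_scal, <- sumV_plus. apply sumV_ext; intros; ring.
Qed.

Section Nonnegative.
Hypothesis M_nonneg : forall v w, (v < n)%nat -> (w < n)%nat -> 0 <= M v w.

Lemma matpow_nonneg k g v : (forall w, (w < n)%nat -> 0 <= g w) -> (v < n)%nat ->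
  0 <= matpow k g v.
Proof.
  intros H. revert v; induction k as [|k IH]; simpl; intros v Hv; auto.
  apply sumV_nonneg; intros w Hw. apply Rmult_le_pos; auto.
Qed.

Lemma expm_ge t g v : 0 <= t -> (forall w, (w < n)%nat -> 0 <= g w) -> (v < n)%nat ->
  g v <= expm t g v.
Proof.
  intros Ht Hg Hv. unfold expm, PSeries.
  assert (Hex : ex_series (fun k => expm_coef g v k * t ^ k)).
  { destruct (ex_pseries_expm_coef g v t Hv) as [l Hl]. exists l.
    eapply is_series_ext; [|exact Hl]. intros k; simpl; rewrite pow_n_pow.
    change scal with Rmult; simpl; unfold mult; simpl; ring. }
  rewrite Series_incr_1 by auto.
  replace (expm_coef g v 0 * t ^ 0) with (g v) by (unfold expm_coef; simpl; field).
  enough (0 <= Series (fun k => expm_coef g v (S k) * t ^ S k)) by lra.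
  assert (Hzero : Series (fun _ => 0) = 0).
  { rewrite (Series_ext _ (fun _ => 0 * 0)), Series_scal_l by (intros; ring). ring. }
  rewrite <- Hzero. apply Series_le.
  - intros k; split; [lra|]. unfold expm_coef. apply Rmult_le_pos; [|now apply pow_le].
    apply Rmult_le_pos; [now apply matpow_nonneg | apply Rlt_le, Rinv_0_lt_compat, INR_fact_lt_0].
  - now apply (ex_series_incr_1 (fun k => expm_coef g v k * t ^ k)).
Qed.
End Nonnegative.
End MatrixExponential.

Lemma quadratic_form_bound n M (D : nat -> R) :
  Rabs (sumV n (fun v => D v * matvec n M D v)) <= mnorm n M * INR n * sumV n (fun v => D v ^ 2).
Proof.
  pose proof (mnorm_nonneg n M).
  apply Rle_trans with (sumV n (fun v => sumV n (fun w => mnorm n M * ((D v ^ 2 + D w ^ 2) / 2)))).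
  - eapply Rle_trans; [apply Rabs_sumV_le|]. apply sumV_le; intros v Hv.
    rewrite Rabs_mult. eapply Rle_trans.
    { apply Rmult_le_compat_l; [apply Rabs_pos | apply Rabs_sumV_le]. }
    rewrite <- sumV_scal. apply sumV_le; intros w Hw.
    rewrite Rabs_mult.
    pose proof (Rabs_entry_le_mnorm n M v w Hv Hw).
    assert (Rabs (D v) * Rabs (D w) <= (D v ^ 2 + D w ^ 2) / 2).
    { rewrite <- (pow2_abs (D v)), <- (pow2_abs (D w)).
      pose proof (pow2_ge_0 (Rabs (D v) - Rabs (D w))). nra. }
    pose proof (Rabs_pos (D v)). pose proof (Rabs_pos (D w)). pose proof (Rabs_pos (M v w)).
    assert (0 <= Rabs (D v) * Rabs (D w)) by (apply Rmult_le_pos; auto).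
    nra.
  - apply Req_le.
    rewrite (sumV_ext n _ (fun v => mnorm n M / 2 * (INR n * D v ^ 2)
                                    + mnorm n M / 2 * sumV n (fun w => D w ^ 2))).
    + rewrite sumV_plus, !sumV_scal, sumV_const. field.
    + intros v _. rewrite (sumV_ext n _ (fun w => mnorm n M / 2 * D v ^ 2 + mnorm n M / 2 * D w ^ 2)).
      * rewrite sumV_plus, sumV_const, sumV_scal. ring.
      * intros; field.
Qed.

(* Energy estimate: [exp (-2 K s) * |D s|^2] is nonincreasing, [K = mnorm * n]. *)
Lemma linear_ode_zero n M (D : R -> nat -> R) t v : 0 <= t -> (v < n)%nat ->
  (forall s w, (w < n)%nat -> is_derive (fun s => D s w) s (matvec n M (D s) w)) ->
  (forall w, (w < n)%nat -> D 0 w = 0) -> D t v = 0.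
Proof.
  intros Ht Hv HD HD0.
  set (E := fun s => sumV n (fun w => D s w ^ 2)).
  set (K := mnorm n M * INR n).
  set (dE := fun s => sumV n (fun w => 2 * D s w * matvec n M (D s) w)).
  assert (HE : forall s, is_derive E s (dE s)).
  { intros s. apply is_derive_sumV. intros w Hw. eapply is_derive_eq_val.
    - apply (is_derive_Rcomp (fun x => x ^ 2) (fun s => D s w));
        [apply is_derive_pow, is_derive_id | now apply HD].
    - simpl. change one with 1. ring. }
  assert (HdE : forall s, dE s <= 2 * K * E s).
  { intros s. unfold dE.
    rewrite (sumV_ext n _ (fun w => 2 * (D s w * matvec n M (D s) w))) by (intros; ring).
    rewrite sumV_scal. pose proof (quadratic_form_bound n M (D s)).
    pose proof (Rle_abs (sumV n (fun v => D s v * matvec n M (D s) v))). unfold E, K. lra. }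
  assert (Hdecay : exp (- (2 * K) * t) * E t <= exp (- (2 * K) * 0) * E 0).
  { apply (nonincreasing_of_is_derive (fun s => exp (- (2 * K) * s) * E s)
            (fun s => exp (- (2 * K) * s) * (dE s - 2 * K * E s)) 0 t Ht).
    - intros s _. eapply is_derive_eq_val.
      + apply is_derive_Rmult; [apply is_derive_exp_scal | apply HE].
      + simpl; ring.
    - intros s _. specialize (HdE s). pose proof (exp_pos (- (2 * K) * s)). nra. }
  assert (HE0 : E 0 = 0).
  { unfold E. rewrite (sumV_ext n _ (fun _ => 0)); [apply sumV_zero|].
    intros w Hw. rewrite HD0 by auto. ring. }
  assert (HEt : D t v ^ 2 <= E t).
  { apply (sumV_ge_term n (fun w => D t w ^ 2)); auto. intros; apply pow2_ge_0. }
  rewrite HE0, Rmult_0_r in Hdecay.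
  assert (E t <= 0).
  { apply (Rmult_le_reg_l (exp (- (2 * K) * t))); [apply exp_pos | lra]. }
  pose proof (pow2_ge_0 (D t v)). nra.
Qed.

Lemma matvec_shift n M c h v : (v < n)%nat ->
  matvec n (fun v w => M v w + (if Nat.eqb v w then c else 0)) h v = matvec n M h v + c * h v.
Proof.
  intros Hv. unfold matvec.
  rewrite <- (sumV_kronecker n (fun w => c * h w) v Hv), <- sumV_plus.
  apply sumV_ext; intros w _. destruct (Nat.eqb v w); ring.
Qed.

Lemma expm_shift n M c t g v : 0 <= t -> (v < n)%nat ->
  expm n (fun v w => M v w + (if Nat.eqb v w then c else 0)) t g v = exp (c * t) * expm n M t g v.
Proof.
  intros Ht Hv. set (A := fun v w => M v w + (if Nat.eqb v w then c else 0)).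
  enough (expm n A t g v - exp (c * t) * expm n M t g v = 0) by lra.
  apply (linear_ode_zero n A (fun s w => expm n A s g w - exp (c * s) * expm n M s g w)); auto.
  - intros s w Hw. eapply is_derive_eq_val.
    + apply is_derive_Rminus; [|apply is_derive_Rmult; [apply is_derive_exp_scal|]];
        now apply is_derive_expm.
    + rewrite (matvec_ext n A (fun u => expm n A s g u - exp (c * s) * expm n M s g u)
                 (fun u => expm n A s g u + (- exp (c * s)) * expm n M s g u)) by (intros; ring).
      unfold A. rewrite matvec_lin, !matvec_shift by auto. ring.
  - intros w Hw. rewrite !expm_0, Rmult_0_r, exp_0. ring.
Qed.

Section HeatSemigroup.
Variables (n : nat) (adj : nat -> nat -> bool).

Definition degree (v : nat) : R := sumV n (fun w => if adj v w then 1 else 0).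

Definition laplacian_mat (v w : nat) : R :=
  (if adj v w then 1 else 0) - (if Nat.eqb v w then degree v else 0).

Lemma Lap_ext g h v : (forall w, (w < n)%nat -> g w = h w) -> (v < n)%nat ->
  Lap n adj g v = Lap n adj h v.
Proof. intros H Hv. apply sumV_ext; intros w Hw. now rewrite !H. Qed.

Lemma Lap_matvec g v : (v < n)%nat -> Lap n adj g v = matvec n laplacian_mat g v.
Proof.
  intros Hv. unfold Lap, matvec, laplacian_mat, degree.
  rewrite (sumV_ext n _ (fun w => (if adj v w then 1 else 0) * g w - g v * (if adj v w then 1 else 0)))
    by (intros w _; destruct (adj v w); ring).
  rewrite (sumV_ext n (fun w => _ * g w)
             (fun w => (if adj v w then 1 else 0) * g w
                       - (if Nat.eqb v w then sumV n (fun u => if adj v u then 1 else 0) * g w else 0)))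
    by (intros w _; destruct (Nat.eqb v w); ring).
  rewrite !sumV_minus, sumV_scal, (sumV_kronecker n (fun w => _ * g w)) by auto. ring.
Qed.

Lemma LapPow_matpow k g v : (v < n)%nat -> LapPow n adj k g v = matpow n laplacian_mat k g v.
Proof.
  revert v; induction k as [|k IH]; simpl; intros v Hv; auto.
  rewrite Lap_matvec by auto. now apply matvec_ext.
Qed.

Lemma heat_expm t g v : (v < n)%nat -> heat n adj t g v = expm n laplacian_mat t g v.
Proof.
  intros Hv.
  assert (Hs : infinite_sum (fun k => t ^ k * LapPow n adj k g v / INR (fact k))
                            (expm n laplacian_mat t g v)).
  { apply is_series_Reals. unfold expm, PSeries.
    assert (Hex : ex_series (fun k => expm_coef n laplacian_mat g v k * t ^ k)).
    { destruct (ex_pseries_expm_coef n laplacian_mat g v t Hv) as [l Hl]. exists l.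
      eapply is_series_ext; [|exact Hl]. intros k; simpl; rewrite pow_n_pow.
      change scal with Rmult; simpl; unfold mult; simpl; ring. }
    eapply is_series_ext; [|apply Series_correct, Hex].
    intros k; unfold expm_coef. rewrite LapPow_matpow by auto.
    simpl. field. apply INR_fact_neq_0. }
  unfold heat. eapply uniqueness_sum; [|exact Hs].
  exact (epsilon_spec (inhabits 0) (fun l => infinite_sum _ l) (ex_intro _ _ Hs)).
Qed.

Lemma heat_ext t g h v : (forall w, (w < n)%nat -> g w = h w) -> (v < n)%nat ->
  heat n adj t g v = heat n adj t h v.
Proof. intros; rewrite !heat_expm by auto; now apply expm_ext. Qed.

Lemma heat_0 g v : (v < n)%nat -> heat n adj 0 g v = g v.
Proof. intros; now rewrite heat_expm, expm_0. Qed.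

Lemma heat_lin t g h a v : (v < n)%nat ->
  heat n adj t (fun w => g w + a * h w) v = heat n adj t g v + a * heat n adj t h v.
Proof. intros; rewrite !heat_expm by auto; now apply expm_lin. Qed.

Lemma heat_scal t a g v : (v < n)%nat -> heat n adj t (fun w => a * g w) v = a * heat n adj t g v.
Proof.
  intros Hv. rewrite (heat_ext t _ (fun w => 0 + a * g w)), heat_lin, !heat_expm, expm_zero
    by (auto; intros; ring). ring.
Qed.

Lemma is_derive_heat t g v : (v < n)%nat ->
  is_derive (fun s => heat n adj s g v) t (Lap n adj (heat n adj t g) v).
Proof.
  intros Hv. eapply is_derive_ext; [intros s; symmetry; now apply heat_expm|].
  rewrite Lap_matvec, (matvec_ext _ _ _ (expm n laplacian_mat t g))
    by (intros; auto; now apply heat_expm).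
  now apply is_derive_expm.
Qed.

Lemma is_derive_heat_backward t (H : R -> nat -> R) (H' : nat -> R) s v : (v < n)%nat ->
  (forall w, (w < n)%nat -> is_derive (fun s => H s w) s (H' w)) ->
  is_derive (fun s => heat n adj (t - s) (H s) v) s
    (heat n adj (t - s) (fun w => H' w - Lap n adj (H s) w) v).
Proof.
  intros Hv HD. eapply is_derive_ext; [intros r; symmetry; now apply heat_expm|].
  rewrite heat_expm by auto.
  rewrite (expm_ext _ _ _ _ (fun w => H' w - matvec n laplacian_mat (H s) w))
    by (auto; intros; now rewrite Lap_matvec).
  now apply is_derive_expm_backward.
Qed.

Lemma heat_semigroup s t g v : 0 <= s -> (v < n)%nat ->
  heat n adj (t - s) (heat n adj s g) v = heat n adj t g v.
Proof.
  intros Hs Hv. transitivity (heat n adj (t - 0) (heat n adj 0 g) v).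
  2: { rewrite Rminus_0_r. apply heat_ext; auto; intros; now apply heat_0. }
  apply (constant_of_is_derive_0 (fun s => heat n adj (t - s) (heat n adj s g) v) 0 s); [lra|].
  intros r Hr. eapply is_derive_eq_val.
  - apply is_derive_heat_backward; auto. intros; now apply is_derive_heat.
  - rewrite (heat_ext _ _ (fun _ => 0)) by (auto; intros; ring).
    rewrite heat_expm by auto. apply expm_zero.
Qed.

Lemma heat_lower_bound t g v : 0 <= t -> (forall w, (w < n)%nat -> 0 <= g w) -> (v < n)%nat ->
  exp (- INR n * t) * g v <= heat n adj t g v.
Proof.
  intros Ht Hg Hv. set (c := INR n).
  assert (Hshift := expm_shift n laplacian_mat c t g v Ht Hv).
  assert (Hexp : exp (c * t) * exp (- c * t) = 1)
    by (rewrite <- exp_plus; replace (c * t + - c * t) with 0 by ring; apply exp_0).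
  rewrite heat_expm by auto.
  replace (expm n laplacian_mat t g v)
    with (exp (- c * t) * expm n (fun v w => laplacian_mat v w + (if Nat.eqb v w then c else 0)) t g v)
    by (rewrite Hshift, <- Rmult_assoc, (Rmult_comm (exp (- c * t))), Hexp; ring).
  apply Rmult_le_compat_l; [apply Rlt_le, exp_pos|].
  apply expm_ge; auto. intros u w Hu Hw. unfold laplacian_mat.
  assert (degree u <= c).
  { unfold degree, c. rewrite <- (Rmult_1_r (INR n)), <- sumV_const.
    apply sumV_le; intros; destruct (adj u w0); lra. }
  destruct (adj u w), (Nat.eqb u w); lra.
Qed.

Lemma heat_nonneg t g v : 0 <= t -> (forall w, (w < n)%nat -> 0 <= g w) -> (v < n)%nat ->
  0 <= heat n adj t g v.
Proof.
  intros Ht Hg Hv. eapply Rle_trans; [|now apply heat_lower_bound].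
  apply Rmult_le_pos; [apply Rlt_le, exp_pos | now apply Hg].
Qed.

Lemma heat_pos t g v : 0 <= t -> (forall w, (w < n)%nat -> 0 < g w) -> (v < n)%nat ->
  0 < heat n adj t g v.
Proof.
  intros Ht Hg Hv. eapply Rlt_le_trans; [|apply heat_lower_bound; auto; intros; now apply Rlt_le, Hg].
  apply Rmult_lt_0_compat; [apply exp_pos | now apply Hg].
Qed.

Lemma heat_le t g h v : 0 <= t -> (forall w, (w < n)%nat -> g w <= h w) -> (v < n)%nat ->
  heat n adj t g v <= heat n adj t h v.
Proof.
  intros Ht H Hv.
  rewrite (heat_ext t h (fun w => g w + 1 * (h w - g w))), heat_lin by (auto; intros; ring).
  enough (0 <= heat n adj t (fun w => h w - g w) v) by lra.
  apply heat_nonneg; auto. intros w Hw. specialize (H w Hw). lra.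
Qed.
End HeatSemigroup.

Lemma li_yau_of_bounds c x B t d : 0 < c -> 0 < t -> 0 < d ->
  B <= c * x -> B * (1 + 2 * t / d * x) <= c * x -> - x <= d / (2 * t).
Proof.
  intros Hc Ht Hd H1 H2. set (y := 2 * t / d) in H2.
  assert (Hy : 0 < y) by (unfold y; apply Rdiv_lt_0_compat; lra).
  replace (d / (2 * t)) with (/ y) by (unfold y; field; lra).
  destruct (Rle_or_lt 0 (1 + y * x)) as [Hpos|Hneg].
  - apply (Rmult_le_reg_l y); auto. rewrite Rinv_r; lra.
  - exfalso. assert (c * x * (1 + y * x) <= B * (1 + y * x)) by nra.
    assert (0 < c * y * (x * x)) by (apply Rmult_lt_0_compat; nra). nra.
Qed.

Section BakryEmery.
Variables (psi dpsi : R -> R).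
Hypothesis Hpsi : forall x, 0 < x -> derivable_pt_lim psi x (dpsi x).
Variables (n : nat) (adj : nat -> nat -> bool).

Lemma DeltaPsi_ext f h v : (forall w, (w < n)%nat -> f w = h w) -> (v < n)%nat ->
  DeltaPsi n adj psi f v = DeltaPsi n adj psi h v.
Proof. intros H Hv. apply Lap_ext; auto. intros; now rewrite !H. Qed.

Lemma OmegaPsi_ext f h v : (forall w, (w < n)%nat -> f w = h w) -> (v < n)%nat ->
  OmegaPsi n adj dpsi f v = OmegaPsi n adj dpsi h v.
Proof.
  intros H Hv. unfold OmegaPsi. rewrite (Lap_ext n adj f h v) by auto. apply Lap_ext; auto.
  intros w Hw. now rewrite !H, (Lap_ext n adj f h w).
Qed.

Section Flow.
Variables (G : R -> nat -> R) (s : R).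
Hypothesis HG : forall w, (w < n)%nat -> is_derive (fun s => G s w) s (Lap n adj (G s) w).
Hypothesis HGpos : forall w, (w < n)%nat -> 0 < G s w.

Lemma is_derive_psi_ratio u v : (u < n)%nat -> (v < n)%nat ->
  is_derive (fun s => psi (G s u / G s v)) s
    (dpsi (G s u / G s v) * (G s u / G s v)
     * (Lap n adj (G s) u / G s u - Lap n adj (G s) v / G s v)).
Proof.
  intros Hu Hv. pose proof (HGpos u Hu). pose proof (HGpos v Hv).
  eapply is_derive_eq_val.
  - apply (is_derive_Rcomp psi (fun s => G s u / G s v)).
    + apply is_derive_Reals, Hpsi, Rdiv_lt_0_compat; auto.
    + apply (is_derive_div (fun s => G s u) (fun s => G s v)); auto. lra.
  - simpl. field. lra.
Qed.

Lemma is_derive_DeltaPsi v : (v < n)%nat ->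
  is_derive (fun s => DeltaPsi n adj psi (G s) v) s (OmegaPsi n adj dpsi (G s) v).
Proof.
  intros Hv. unfold DeltaPsi, OmegaPsi, Lap.
  apply (is_derive_sumV n (fun s w => if adj v w then psi (G s w / G s v) - psi (G s v / G s v) else 0)).
  intros w Hw. destruct (adj v w); [|apply is_derive_Rconst].
  apply is_derive_Rminus; now apply is_derive_psi_ratio.
Qed.
End Flow.

Lemma heat_cauchy_schwarz t p q v : 0 <= t -> (v < n)%nat -> (forall w, (w < n)%nat -> 0 < p w) ->
  heat n adj t (fun w => p w * q w) v ^ 2
  <= heat n adj t p v * heat n adj t (fun w => p w * q w ^ 2) v.
Proof.
  intros Ht Hv Hp.
  set (A := heat n adj t p v). set (B := heat n adj t (fun w => p w * q w) v).
  set (C := heat n adj t (fun w => p w * q w ^ 2) v).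
  assert (Hquad : forall l, 0 <= C + (-2 * l) * B + l ^ 2 * A).
  { intros l. unfold A, B, C. rewrite <- !heat_lin by auto.
    apply heat_nonneg; auto. intros w Hw. specialize (Hp w Hw).
    replace (p w * q w ^ 2 + -2 * l * (p w * q w) + l ^ 2 * p w) with (p w * (q w - l) ^ 2) by ring.
    apply Rmult_le_pos; [lra | apply pow2_ge_0]. }
  assert (HA : 0 < A) by (now apply heat_pos).
  specialize (Hquad (B / A)).
  replace (C + -2 * (B / A) * B + (B / A) ^ 2 * A) with ((A * C - B ^ 2) / A) in Hquad by (field; lra).
  enough (0 <= A * C - B ^ 2) by lra.
  apply (Rmult_le_reg_r (/ A)); [now apply Rinv_0_lt_compat | lra].
Qed.

Variable d : R.
Hypothesis Hd : 0 < d.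

Section Interpolation.
Variables (f : nat -> R) (t : R) (v : nat).
Hypotheses (Hf : posfun n f) (Ht : 0 <= t) (Hv : (v < n)%nat).

Let P s := heat n adj s f.
Let Phi s := heat n adj (t - s) (fun w => P s w * DeltaPsi n adj psi (P s) w) v.

Lemma heat_flow_pos s w : 0 <= s -> (w < n)%nat -> 0 < P s w.
Proof. intros; apply heat_pos; [assumption | exact Hf | assumption]. Qed.

Lemma is_derive_interpolation s : 0 <= s ->
  is_derive Phi s (heat n adj (t - s) (fun w => 2 * P s w * Gamma2Psi n adj psi dpsi (P s) w) v).
Proof.
  intros Hs. eapply is_derive_eq_val.
  - apply is_derive_heat_backward; auto. intros w Hw. apply is_derive_Rmult.
    + now apply is_derive_heat.
    + apply is_derive_DeltaPsi; auto; intros; [now apply is_derive_heat | now apply heat_flow_pos].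
  - apply heat_ext; auto. intros w Hw. pose proof (heat_flow_pos s w Hs Hw).
    unfold Gamma2Psi, P in *. field. lra.
Qed.

Lemma interpolation_riccati : CDpsi n adj psi dpsi d -> forall s, 0 <= s <= t ->
  2 / (d * heat n adj t f v) * Phi s ^ 2
  <= heat n adj (t - s) (fun w => 2 * P s w * Gamma2Psi n adj psi dpsi (P s) w) v.
Proof.
  intros HCD s Hs.
  assert (HPpos : forall w, (w < n)%nat -> 0 < P s w)
    by (intros; apply heat_flow_pos; [lra | assumption]).
  assert (Hc : 0 < heat n adj t f v) by (apply heat_pos; [exact Ht | exact Hf | exact Hv]).
  assert (HCS := heat_cauchy_schwarz (t - s) (P s) (DeltaPsi n adj psi (P s)) v
                   ltac:(lra) Hv HPpos).
  replace (heat n adj (t - s) (P s) v) with (heat n adj t f v) in HCS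
    by (symmetry; apply heat_semigroup; [lra | exact Hv]).
  assert (HCDint : heat n adj (t - s) (fun w => 2 / d * (P s w * DeltaPsi n adj psi (P s) w ^ 2)) v
                   <= heat n adj (t - s) (fun w => 2 * P s w * Gamma2Psi n adj psi dpsi (P s) w) v).
  { apply heat_le; [lra | | exact Hv]. intros w Hw.
    specialize (HCD (P s) HPpos w Hw). apply Rge_le in HCD.
    apply (Rmult_le_compat_l (2 * P s w)) in HCD; [|specialize (HPpos w Hw); lra].
    unfold Rdiv. lra. }
  rewrite heat_scal in HCDint by auto. fold (Phi s) in HCS.
  eapply Rle_trans; [|exact HCDint].
  apply (Rmult_le_reg_l (heat n adj t f v)); auto.
  replace (heat n adj t f v * (2 / (d * heat n adj t f v) * Phi s ^ 2)) with (2 / d * Phi s ^ 2)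
    by (field; lra).
  rewrite <- Rmult_assoc, (Rmult_comm _ (2 / d)), Rmult_assoc.
  apply Rmult_le_compat_l; [apply Rlt_le, Rdiv_lt_0_compat; lra | exact HCS].
Qed.

Lemma CD_integrated : CDpsi n adj psi dpsi d ->
  heat n adj t (fun w => f w * DeltaPsi n adj psi f w) v
    <= heat n adj t f v * DeltaPsi n adj psi (heat n adj t f) v /\
  heat n adj t (fun w => f w * DeltaPsi n adj psi f w) v
    * (1 + 2 * t / d * DeltaPsi n adj psi (heat n adj t f) v)
    <= heat n adj t f v * DeltaPsi n adj psi (heat n adj t f) v.
Proof.
  intros HCD.
  assert (Hc : 0 < heat n adj t f v) by (apply heat_pos; [exact Ht | exact Hf | exact Hv]).
  assert (HPhi0 : Phi 0 = heat n adj t (fun w => f w * DeltaPsi n adj psi f w) v).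
  { unfold Phi, P. rewrite Rminus_0_r. apply heat_ext; auto. intros w Hw.
    rewrite heat_0 by auto. f_equal. apply DeltaPsi_ext; auto. intros; now apply heat_0. }
  assert (HPhit : Phi t = heat n adj t f v * DeltaPsi n adj psi (heat n adj t f) v).
  { unfold Phi. rewrite Rminus_diag, heat_0 by auto. reflexivity. }
  set (k := 2 / (d * heat n adj t f v)).
  assert (Hk : 0 < k) by (apply Rdiv_lt_0_compat; nra).
  assert (HPhi : forall s, 0 <= s <= t -> is_derive Phi s
            (heat n adj (t - s) (fun w => 2 * P s w * Gamma2Psi n adj psi dpsi (P s) w) v))
    by (intros s Hs; apply is_derive_interpolation; lra).
  pose proof (interpolation_riccati HCD) as HR.
  rewrite <- HPhi0, <- HPhit. split.
  - apply (riccati_nondecreasing _ _ k t Hk HPhi HR); lra.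
  - pose proof (riccati_integrated _ _ k t Hk Ht HPhi HR) as HI. unfold k in HI.
    replace (Phi 0 * (1 + 2 * t / d * DeltaPsi n adj psi (heat n adj t f) v))
      with (Phi 0 + 2 / (d * heat n adj t f v) * t * Phi 0 * Phi t) by (rewrite HPhit; field; lra).
    exact HI.
Qed.
End Interpolation.

Lemma is_derive_gap_at_0 f v : posfun n f -> (v < n)%nat ->
  is_derive (fun t => heat n adj t f v * DeltaPsi n adj psi (heat n adj t f) v
                      - heat n adj t (fun w => f w * DeltaPsi n adj psi f w) v
                        * (1 + 2 * t / d * DeltaPsi n adj psi (heat n adj t f) v))
    0 (2 * f v * (Gamma2Psi n adj psi dpsi f v - / d * DeltaPsi n adj psi f v ^ 2)).
Proof.
  intros Hf Hv. set (h := fun w => f w * DeltaPsi n adj psi f w).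
  assert (Hflow : forall w, (w < n)%nat ->
            is_derive (fun s => heat n adj s f w) 0 (Lap n adj (heat n adj 0 f) w))
    by (intros; now apply is_derive_heat).
  assert (Hpos : forall w, (w < n)%nat -> 0 < heat n adj 0 f w)
    by (intros; rewrite heat_0; auto; now apply Hf).
  assert (HD := is_derive_DeltaPsi (fun s => heat n adj s f) 0 Hflow Hpos v Hv).
  eapply is_derive_eq_val.
  - apply is_derive_Rminus; [apply is_derive_Rmult; [now apply is_derive_heat | exact HD]|].
    apply is_derive_Rmult; [now apply is_derive_heat|].
    apply (is_derive_Rplus (fun _ => 1)); [apply is_derive_Rconst|].
    apply is_derive_Rmult; [|exact HD].
    eapply is_derive_ext; [|apply (is_derive_Rscal (2 / d))]. intros; simpl; field; lra.
  - rewrite (Lap_ext _ _ (heat n adj 0 h) h), (Lap_ext _ _ (heat n adj 0 f) f),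
      (DeltaPsi_ext (heat n adj 0 f) f), (OmegaPsi_ext (heat n adj 0 f) f), !heat_0
      by (auto; intros; now apply heat_0).
    pose proof (Hf v Hv). unfold Gamma2Psi, h. field. lra.
Qed.

Lemma CD_of_gap f v : posfun n f -> (v < n)%nat ->
  (forall t, 0 <= t ->
     heat n adj t f v * DeltaPsi n adj psi (heat n adj t f) v
     >= heat n adj t (fun w => f w * DeltaPsi n adj psi f w) v
        * (1 + 2 * t / d * DeltaPsi n adj psi (heat n adj t f) v)) ->
  Gamma2Psi n adj psi dpsi f v >= / d * DeltaPsi n adj psi f v ^ 2.
Proof.
  intros Hf Hv Hgap.
  assert (Hl := is_derive_nonneg_at_0 _ _ (is_derive_gap_at_0 f v Hf Hv)).
  pose proof (Hf v Hv).
  enough (0 <= 2 * f v * (Gamma2Psi n adj psi dpsi f v - / d * DeltaPsi n adj psi f v ^ 2)) by nra.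
  apply Hl.
  - rewrite !heat_0, (DeltaPsi_ext (heat n adj 0 f) f) by (auto; intros; now apply heat_0).
    unfold Rdiv; ring.
  - intros t Ht. specialize (Hgap t ltac:(lra)). lra.
Qed.
End BakryEmery.

Theorem mainTheorem8 (psi dpsi : R -> R)
  (Hpsi : forall x, 0 < x -> derivable_pt_lim psi x (dpsi x))
  (Hdpsi : forall x, 0 < x -> continuity_pt dpsi x)
  (d : R) (Hd : 0 < d)
  (n : nat) (adj : nat -> nat -> bool) (Hg : is_graph n adj) :
  (CDpsi n adj psi dpsi d <->
   (forall f, posfun n f -> forall t, 0 <= t -> forall v, (v < n)%nat ->
      heat n adj t f v * DeltaPsi n adj psi (heat n adj t f) v
      >= heat n adj t (fun w => f w * DeltaPsi n adj psi f w) v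
         * (1 + 2 * t / d * DeltaPsi n adj psi (heat n adj t f) v)))
  /\
  (CDpsi n adj psi dpsi d ->
   forall f, posfun n f -> forall t, 0 < t -> forall v, (v < n)%nat ->
     - DeltaPsi n adj psi (heat n adj t f) v <= d / (2 * t)).
Proof.
  split; [split|].
  - intros HCD f Hf t Ht v Hv.
    apply Rle_ge, (CD_integrated psi dpsi Hpsi n adj d Hd f t v Hf Ht Hv HCD).
  - intros Hgap f Hf v Hv.
    apply (CD_of_gap psi dpsi Hpsi n adj d Hd f v Hf Hv). intros t Ht. now apply Hgap.
  - intros HCD f Hf t Ht v Hv.
    destruct (CD_integrated psi dpsi Hpsi n adj d Hd f t v Hf (Rlt_le _ _ Ht) Hv HCD) as [H1 H2].
    apply (li_yau_of_bounds _ _ _ _ _ (heat_pos n adj t f v (Rlt_le _ _ Ht) Hf Hv) Ht Hd H1 H2).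
Qed.
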